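(* Let $\mathbb{A}$ be a 2-category having the two-dimensional cokernel diagram of a 1-cell $p:e\to b$. Then: (1) provided that a right Kan extension $\mathrm{Ran}_pp$ of $p$ along $p$ exists and is preserved by $\delta^0:b\to b\uparrow_pb$, $p$ is monadic if and only if $p$ is an effective faithful morphism; (2) provided that a left Kan extension $\mathrm{Lan}_pp$ of $p$ along $p$ exists and is preserved by $\delta^1:b\to b\uparrow_pb$, $p$ is comonadic if and only if $p$ is an effective faithful morphism.
   Context: A 2-category is a $\mathbf{Cat}$-enriched category; composition of 1-cells is juxtaposition, vertical composition of 2-cells is $\cdot$, horizontal composition is $\ast$, $\mathrm{id}_f$ is the identity 2-cell on $f$. $\mathbb{A}^{\mathrm{co}}$ is obtained from $\mathbb{A}$ by reversing 2-cells. A 1-cell is an equivalence if it has a pseudo-inverse up to invertible 2-cells. Opcomma object of $p$ along itself: $b\uparrow_p b$ with $\delta^0,\delta^1:b\to b\uparrow_pb$ and $\alpha:\delta^1p\Rightarrow\delta^0p$ such that for every $y$, $h\mapsto(h\delta^0,h\delta^1,\mathrm{id}_h\ast\alpha)$, $\xi\mapsto(\xi\ast\mathrm{id}_{\delta^0},\xi\ast\mathrm{id}_{\delta^1})$ is an isomorphism from $\mathbb{A}(b\uparrow_pb,y)$ onto the category of triples $(h_0,h_1:b\to y,\beta:h_1p\Rightarrow h_0p)$ with morphisms pairs $(\xi_0,\xi_1)$ with $(\xi_0\ast\mathrm{id}_p)\cdot\beta=\beta'\cdot(\xi_1\ast\mathrm{id}_p)$. A two-dimensional pushout of a span $f_0:c\to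 c_0$, $f_1:c\to c_1$ is $P$ with $q_0,q_1$, $q_0f_0=q_1f_1$, such that $k\mapsto(kq_0,kq_1)$ is an isomorphism from $\mathbb{A}(P,y)$ onto the category of pairs $(k_0,k_1)$ with $k_0f_0=k_1f_1$ and morphisms pairs of 2-cells $(\xi_0,\xi_1)$ with $\xi_0\ast\mathrm{id}_{f_0}=\xi_1\ast\mathrm{id}_{f_1}$. $\mathbb{A}$ has the two-dimensional cokernel diagram of $p$ if it has $b\uparrow_pb$ and a two-dimensional pushout $b\uparrow_pb\uparrow_pb$ of $(\delta^0,\delta^1)$ with $D^0,D^2$, $D^2\delta^0=D^0\delta^1$; $D^1$ is the unique 1-cell with $D^1\delta^1=D^2\delta^1$, $D^1\delta^0=D^0\delta^0$, $\mathrm{id}_{D^1}\ast\alpha=(\mathrm{id}_{D^0}\ast\alpha)\cdot(\mathrm{id}_{D^2}\ast\alpha)$; $s^0$ is the unique 1-cell with $s^0\delta^0=s^0\delta^1=\mathrm{id}_b$, $\mathrm{id}_{s^0}\ast\alpha=\mathrm{id}_p$. Effective faithful: $\mathrm{Desc}_p(y)$ has objects $(h:y\to b,\beta:\delta^1h\Rightarrow\delta^0h)$ with $(\mathrm{id}_{D^0}\ast\beta)\cdot(\mathrm{id}_{D^2}\ast\beta)=\mathrm{id}_{D^1}\ast\beta$, $\mathrm{id}_{s^0}\ast\beta=\mathrm{id}_h$, morphisms 2-cells $\xi:h_1\Rightarrow h_0$ with $\beta_0\cdot(\mathrm{id}_{\delta^1}\ast\xi)=(\mathrm{id}_{\delta^0}\ast\xi)\cdot\beta_1$.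 A lax descent object is $L$ with $d:L\to b$, $\Psi:\delta^1d\Rightarrow\delta^0d$ such that $g\mapsto(dg,\Psi\ast\mathrm{id}_g)$, $\xi\mapsto\mathrm{id}_d\ast\xi$ is an isomorphism $\mathbb{A}(y,L)\cong\mathrm{Desc}_p(y)$ for all $y$; $p^H$ is the unique 1-cell with $dp^H=p$, $\Psi\ast\mathrm{id}_{p^H}=\alpha$. $p$ is an effective faithful morphism if $\mathbb{A}$ has the two-dimensional cokernel diagram of $p$, a lax descent object of it, and $p^H$ is an equivalence. Right Kan extension of $f$ along $g$: $(r,\gamma:rg\Rightarrow f)$ such that $\beta\mapsto\gamma\cdot(\beta\ast\mathrm{id}_g)$ is a bijection from 2-cells $k\Rightarrow r$ to 2-cells $kg\Rightarrow f$ for all $k$; a 1-cell $\delta$ preserves it if $(\delta r,\mathrm{id}_\delta\ast\gamma)$ is a right Kan extension of $\delta f$ along $g$. Codensity monad: from a right Kan extension $(t,\gamma)$ of $p$ along $p$, $(b,t,m,\eta)$ with $m$ unique such that $\gamma\cdot(m\ast\mathrm{id}_p)=\gamma\cdot(\mathrm{id}_t\ast\gamma)$ and $\eta$ unique with $\gamma\cdot(\eta\ast\mathrm{id}_p)=\mathrm{id}_p$. An Eilenberg–Moore object of a monad $\mathsf{T}=(b,t,m,\eta)$ is $b^{\mathsf{T}}$ with $u:b^{\mathsf{T}}\to b$, $\mu:tu\Rightarrow u$ such that $g\mapsto(ug,\mu\ast\mathrm{id}_g)$ is an isomorphism from $\mathbb{A}(y,b^{\mathsf{T}})$ onto the category of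 pairs $(h,\beta:th\Rightarrow h)$ with $\beta\cdot(\mathrm{id}_t\ast\beta)=\beta\cdot(m\ast\mathrm{id}_h)$, $\beta\cdot(\eta\ast\mathrm{id}_h)=\mathrm{id}_h$ (morphisms $\xi$ with $\xi\cdot\beta_1=\beta_0\cdot(\mathrm{id}_t\ast\xi)$). $p$ is monadic if it has a codensity monad $\mathsf{T}$, $\mathbb{A}$ has an Eilenberg–Moore object of $\mathsf{T}$, and the unique $p^{\mathsf{T}}$ with $up^{\mathsf{T}}=p$, $\mu\ast\mathrm{id}_{p^{\mathsf{T}}}=\gamma$ is an equivalence. Duals: a left Kan extension in $\mathbb{A}$ (and its preservation) means a right Kan extension (and its preservation) in $\mathbb{A}^{\mathrm{co}}$; $p$ is comonadic if the corresponding 1-cell of $\mathbb{A}^{\mathrm{co}}$ is monadic in $\mathbb{A}^{\mathrm{co}}$. *)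

(* Strict 2-categories in a "single-sorted"
   presentation: in each hom-category all 2-cells a -> b live in one type
   [Cell a b], with source/target maps; vertical composition is a total
   operation whose axioms are stated only for composable pairs. *)

Set Implicit Arguments.
Unset Strict Implicit.

Record PreTwoCat := {
  Ob : Type;
  Hom : Ob -> Ob -> Type;
  Cell : Ob -> Ob -> Type;
  src : forall a b : Ob, Cell a b -> Hom a b;
  tgt : forall a b : Ob, Cell a b -> Hom a b;
  id1 : forall a : Ob, Hom a a;
  comp1 : forall a b c : Ob, Hom b c -> Hom a b -> Hom a c;
  id2 : forall a b : Ob, Hom a b -> Cell a b;
  vcomp : forall a b : Ob, Cell a b -> Cell a b -> Cell a b; (* vcomp b a = b . a (a first) *)
  hcomp : forall a b c : Ob, Cell b c -> Cell a b -> Cell a c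
}.

Arguments Ob : clear implicits.
Arguments Hom : clear implicits.
Arguments Cell : clear implicits.
Arguments src {_ _ _} _.
Arguments tgt {_ _ _} _.
Arguments id1 {_} _.
Arguments comp1 {_ _ _ _} _ _.
Arguments id2 {_ _ _} _.
Arguments vcomp {_ _ _} _ _.
Arguments hcomp {_ _ _ _} _ _.

Record is_two_cat (A : PreTwoCat) : Prop := {
  src_id2 : forall a b (f : Hom A a b), src (id2 f) = f;
  tgt_id2 : forall a b (f : Hom A a b), tgt (id2 f) = f;
  src_vcomp : forall a b (be al : Cell A a b),
      src be = tgt al -> src (vcomp be al) = src al;
  tgt_vcomp : forall a b (be al : Cell A a b),
      src be = tgt al -> tgt (vcomp be al) = tgt be;
  vcomp_id_l : forall a b (al : Cell A a b), vcomp (id2 (tgt al)) al = al;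
  vcomp_id_r : forall a b (al : Cell A a b), vcomp al (id2 (src al)) = al;
  vcomp_assoc : forall a b (ga be al : Cell A a b),
      src ga = tgt be -> src be = tgt al ->
      vcomp ga (vcomp be al) = vcomp (vcomp ga be) al;
  comp1_assoc : forall a b c d (h : Hom A c d) (g : Hom A b c) (f : Hom A a b),
      comp1 h (comp1 g f) = comp1 (comp1 h g) f;
  comp1_id_l : forall a b (f : Hom A a b), comp1 (id1 b) f = f;
  comp1_id_r : forall a b (f : Hom A a b), comp1 f (id1 a) = f;
  src_hcomp : forall a b c (be : Cell A b c) (al : Cell A a b),
      src (hcomp be al) = comp1 (src be) (src al);
  tgt_hcomp : forall a b c (be : Cell A b c) (al : Cell A a b),
      tgt (hcomp be al) = comp1 (tgt be) (tgt al);
  hcomp_assoc : forall a b c d (ga : Cell A c d) (be : Cell A b c) (al : Cell A a b),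
      hcomp ga (hcomp be al) = hcomp (hcomp ga be) al;
  hcomp_id_l : forall a b (al : Cell A a b), hcomp (id2 (id1 b)) al = al;
  hcomp_id_r : forall a b (al : Cell A a b), hcomp al (id2 (id1 a)) = al;
  hcomp_id2 : forall a b c (g : Hom A b c) (f : Hom A a b),
      hcomp (id2 g) (id2 f) = id2 (comp1 g f);
  interchange : forall a b c (be' be : Cell A b c) (al' al : Cell A a b),
      src be' = tgt be -> src al' = tgt al ->
      hcomp (vcomp be' be) (vcomp al' al) = vcomp (hcomp be' al') (hcomp be al)
}.

Definition co (A : PreTwoCat) : PreTwoCat :=
  {| Ob := Ob A; Hom := Hom A; Cell := Cell A;
     src := fun a b th => tgt th; tgt := fun a b th => src th;
     id1 := fun a => id1 a; comp1 := fun a b c g f => comp1 g f;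
     id2 := fun a b f => id2 f;
     vcomp := fun a b be al => vcomp al be;
     hcomp := fun a b c be al => hcomp be al |}.

Section TwoCatNotions.
Variable A : PreTwoCat.

Definition cell_ok {a b : Ob A} (th : Cell A a b) (f g : Hom A a b) : Prop :=
  src th = f /\ tgt th = g.

Definition is_iso_cell {a b : Ob A} (th : Cell A a b) (f g : Hom A a b) : Prop :=
  cell_ok th f g /\
  exists th' : Cell A a b, cell_ok th' g f /\ vcomp th' th = id2 f /\ vcomp th th' = id2 g.

Definition is_equivalence {a b : Ob A} (f : Hom A a b) : Prop :=
  exists g : Hom A b a,
    (exists th : Cell A a a, is_iso_cell th (comp1 g f) (id1 a)) /\
    (exists th : Cell A b b, is_iso_cell th (comp1 f g) (id1 b)).

(* (c, d0, d1, al) is an opcomma object of p along itself; the functor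
   h |-> (h d0, h d1, id_h * al) is bijective on objects and fully faithful. *)
Definition is_opcomma {e b : Ob A} (p : Hom A e b) {c : Ob A}
    (d0 d1 : Hom A b c) (al : Cell A e c) : Prop :=
  cell_ok al (comp1 d1 p) (comp1 d0 p) /\
  forall y : Ob A,
    (forall (h0 h1 : Hom A b y) (be : Cell A e y),
        cell_ok be (comp1 h1 p) (comp1 h0 p) ->
        exists! h : Hom A c y,
          comp1 h d0 = h0 /\ comp1 h d1 = h1 /\ hcomp (id2 h) al = be) /\
    (forall (h h' : Hom A c y) (xi0 xi1 : Cell A b y),
        cell_ok xi0 (comp1 h d0) (comp1 h' d0) ->
        cell_ok xi1 (comp1 h d1) (comp1 h' d1) ->
        vcomp (hcomp xi0 (id2 p)) (hcomp (id2 h) al)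
          = vcomp (hcomp (id2 h') al) (hcomp xi1 (id2 p)) ->
        exists! xi : Cell A c y,
          cell_ok xi h h' /\ hcomp xi (id2 d0) = xi0 /\ hcomp xi (id2 d1) = xi1).

Definition is_pushout {c c0 c1 : Ob A} (f0 : Hom A c c0) (f1 : Hom A c c1)
    {P : Ob A} (q0 : Hom A c0 P) (q1 : Hom A c1 P) : Prop :=
  comp1 q0 f0 = comp1 q1 f1 /\
  forall y : Ob A,
    (forall (k0 : Hom A c0 y) (k1 : Hom A c1 y),
        comp1 k0 f0 = comp1 k1 f1 ->
        exists! k : Hom A P y, comp1 k q0 = k0 /\ comp1 k q1 = k1) /\
    (forall (k k' : Hom A P y) (xi0 : Cell A c0 y) (xi1 : Cell A c1 y),
        cell_ok xi0 (comp1 k q0) (comp1 k' q0) ->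
        cell_ok xi1 (comp1 k q1) (comp1 k' q1) ->
        hcomp xi0 (id2 f0) = hcomp xi1 (id2 f1) ->
        exists! xi : Cell A P y,
          cell_ok xi k k' /\ hcomp xi (id2 q0) = xi0 /\ hcomp xi (id2 q1) = xi1).

Record cokernel_diagram {e b : Ob A} (p : Hom A e b) := {
  cd_opc : Ob A;
  cd_d0 : Hom A b cd_opc;
  cd_d1 : Hom A b cd_opc;
  cd_alpha : Cell A e cd_opc;
  cd_opc_spec : is_opcomma p cd_d0 cd_d1 cd_alpha;
  cd_P : Ob A;
  cd_D0 : Hom A cd_opc cd_P;
  cd_D2 : Hom A cd_opc cd_P;
  cd_po_spec : is_pushout cd_d0 cd_d1 cd_D2 cd_D0;
  cd_D1 : Hom A cd_opc cd_P;
  cd_D1_spec :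
    comp1 cd_D1 cd_d1 = comp1 cd_D2 cd_d1 /\
    comp1 cd_D1 cd_d0 = comp1 cd_D0 cd_d0 /\
    hcomp (id2 cd_D1) cd_alpha
      = vcomp (hcomp (id2 cd_D0) cd_alpha) (hcomp (id2 cd_D2) cd_alpha);
  cd_s0 : Hom A cd_opc b;
  cd_s0_spec :
    comp1 cd_s0 cd_d0 = id1 b /\ comp1 cd_s0 cd_d1 = id1 b /\
    hcomp (id2 cd_s0) cd_alpha = id2 p
}.

Section Descent.
Variables (e b : Ob A) (p : Hom A e b) (K : cokernel_diagram p).

Definition is_desc {y : Ob A} (h : Hom A y b) (be : Cell A y (cd_opc K)) : Prop :=
  cell_ok be (comp1 (cd_d1 K) h) (comp1 (cd_d0 K) h) /\
  vcomp (hcomp (id2 (cd_D0 K)) be) (hcomp (id2 (cd_D2 K)) be)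
    = hcomp (id2 (cd_D1 K)) be /\
  hcomp (id2 (cd_s0 K)) be = id2 h.

(* (L, d, Psi) is a lax descent object: g |-> (d g, Psi * id_g) is an
   isomorphism A(y, L) ~ Desc_p(y). *)
Definition is_lax_descent {L : Ob A} (d : Hom A L b) (Psi : Cell A L (cd_opc K)) : Prop :=
  forall y : Ob A,
    (forall g : Hom A y L, is_desc (comp1 d g) (hcomp Psi (id2 g))) /\
    (forall (h : Hom A y b) (be : Cell A y (cd_opc K)),
        is_desc h be ->
        exists! g : Hom A y L, comp1 d g = h /\ hcomp Psi (id2 g) = be) /\
    (forall (g g' : Hom A y L) (xi' : Cell A y b),
        cell_ok xi' (comp1 d g) (comp1 d g') ->
        vcomp (hcomp Psi (id2 g')) (hcomp (id2 (cd_d1 K)) xi')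
          = vcomp (hcomp (id2 (cd_d0 K)) xi') (hcomp Psi (id2 g)) ->
        exists! xi : Cell A y L, cell_ok xi g g' /\ hcomp (id2 d) xi = xi').

Definition effective_faithful : Prop :=
  exists (L : Ob A) (d : Hom A L b) (Psi : Cell A L (cd_opc K)),
    is_lax_descent d Psi /\
    exists pH : Hom A e L,
      comp1 d pH = p /\ hcomp Psi (id2 pH) = cd_alpha K /\ is_equivalence pH.

End Descent.

Definition is_ran {a b0 c : Ob A} (f : Hom A a c) (g : Hom A a b0)
    (r : Hom A b0 c) (ga : Cell A a c) : Prop :=
  cell_ok ga (comp1 r g) f /\
  forall (k : Hom A b0 c) (th : Cell A a c),
    cell_ok th (comp1 k g) f ->
    exists! be : Cell A b0 c, cell_ok be k r /\ vcomp ga (hcomp be (id2 g)) = th.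

Definition preserves_ran {a b0 c c' : Ob A} (dl : Hom A c c') (f : Hom A a c)
    (g : Hom A a b0) (r : Hom A b0 c) (ga : Cell A a c) : Prop :=
  is_ran (comp1 dl f) g (comp1 dl r) (hcomp (id2 dl) ga).

Section Monads.
Variables (b : Ob A) (t : Hom A b b) (m : Cell A b b) (eta : Cell A b b).

Definition is_alg {y : Ob A} (h : Hom A y b) (be : Cell A y b) : Prop :=
  cell_ok be (comp1 t h) h /\
  vcomp be (hcomp (id2 t) be) = vcomp be (hcomp m (id2 h)) /\
  vcomp be (hcomp eta (id2 h)) = id2 h.

Definition is_EM {bT : Ob A} (u : Hom A bT b) (mu : Cell A bT b) : Prop :=
  cell_ok mu (comp1 t u) u /\
  forall y : Ob A,
    (forall g : Hom A y bT, is_alg (comp1 u g) (hcomp mu (id2 g))) /\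
    (forall (h : Hom A y b) (be : Cell A y b),
        is_alg h be ->
        exists! g : Hom A y bT, comp1 u g = h /\ hcomp mu (id2 g) = be) /\
    (forall (g g' : Hom A y bT) (xi' : Cell A y b),
        cell_ok xi' (comp1 u g) (comp1 u g') ->
        vcomp xi' (hcomp mu (id2 g)) = vcomp (hcomp mu (id2 g')) (hcomp (id2 t) xi') ->
        exists! xi : Cell A y bT, cell_ok xi g g' /\ hcomp (id2 u) xi = xi').

End Monads.

Definition monadic {e b : Ob A} (p : Hom A e b) : Prop :=
  exists (t : Hom A b b) (ga : Cell A e b),
    is_ran p p t ga /\
    exists (m eta : Cell A b b),
      (* codensity monad: multiplication and unit *)
      cell_ok m (comp1 t t) t /\
      vcomp ga (hcomp m (id2 p)) = vcomp ga (hcomp (id2 t) ga) /\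
      cell_ok eta (id1 b) t /\
      vcomp ga (hcomp eta (id2 p)) = id2 p /\
      exists (bT : Ob A) (u : Hom A bT b) (mu : Cell A bT b),
        is_EM t m eta u mu /\
        exists pT : Hom A e bT,
          comp1 u pT = p /\ hcomp mu (id2 pT) = ga /\ is_equivalence pT.

End TwoCatNotions.

Definition comonadic (A : PreTwoCat) {e b : Ob A} (p : Hom A e b) : Prop :=
  @monadic (co A) e b p.

(* Suppose the right Kan extension (t, ga) of p along itself is preserved by
   delta^0.  Then alpha : delta^1 p => delta^0 p factors as
   (delta^0 ga) . (ah p) for a 2-cell ah : delta^1 => delta^0 t, and
   [th |-> (delta^0 th) . (ah h)] is a bijection from 2-cells th : t h => h
   onto 2-cells delta^1 h => delta^0 h, whose inverse is whiskering with the
   1-cell r : b up_p b -> b classifying (id, t, ga).  Under this bijection the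
   unit and associativity laws of a codensity algebra become exactly the two
   descent conditions, and algebra morphisms become descent morphisms.  Hence
   Eilenberg-Moore objects of the codensity monad are the same as lax descent
   objects, compatibly with the comparison 1-cells, so p is monadic iff it is
   effective faithful.  The comonadic case is the same statement in A^co,
   whose cokernel diagram of p is that of A with delta^0 and delta^1
   exchanged. *)

From Stdlib Require Import Setoid.

Set Implicit Arguments.
Unset Strict Implicit.

Lemma ex_unique_iff {X : Type} (P Q : X -> Prop) :
  (exists! x, P x) -> (forall x, P x <-> Q x) -> exists! x, Q x.
Proof.
  intros [x [Px Px_uniq]] PQ.
  exists x; split; [now apply PQ|].
  intros y Qy. now apply Px_uniq, PQ.
Qed.

Section UniversalProperties.
Variable A : PreTwoCat.

Lemma opcomma_factor {e b c : Ob A} (p : Hom A e b) (d0 d1 : Hom A b c) al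
    (y : Ob A) (h0 h1 : Hom A b y) (be : Cell A e y) :
  is_opcomma p d0 d1 al -> cell_ok be (comp1 h1 p) (comp1 h0 p) ->
  exists h : Hom A c y, comp1 h d0 = h0 /\ comp1 h d1 = h1 /\ hcomp (id2 h) al = be.
Proof.
  intros [_ opc] be_ok.
  destruct (proj1 (opc y) h0 h1 be be_ok) as [h [h_spec _]].
  now exists h.
Qed.

Lemma opcomma_factor_cell {e b c : Ob A} (p : Hom A e b) (d0 d1 : Hom A b c) al
    (y : Ob A) (h h' : Hom A c y) (xi0 xi1 : Cell A b y) :
  is_opcomma p d0 d1 al ->
  cell_ok xi0 (comp1 h d0) (comp1 h' d0) -> cell_ok xi1 (comp1 h d1) (comp1 h' d1) ->
  vcomp (hcomp xi0 (id2 p)) (hcomp (id2 h) al)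
    = vcomp (hcomp (id2 h') al) (hcomp xi1 (id2 p)) ->
  exists xi : Cell A c y,
    cell_ok xi h h' /\ hcomp xi (id2 d0) = xi0 /\ hcomp xi (id2 d1) = xi1.
Proof.
  intros [_ opc] xi0_ok xi1_ok xi_compat.
  destruct (proj2 (opc y) h h' xi0 xi1 xi0_ok xi1_ok xi_compat) as [xi [xi_spec _]].
  now exists xi.
Qed.

Lemma pushout_factor {c c0 c1 : Ob A} (f0 : Hom A c c0) (f1 : Hom A c c1)
    {P : Ob A} (q0 : Hom A c0 P) (q1 : Hom A c1 P)
    (y : Ob A) (k0 : Hom A c0 y) (k1 : Hom A c1 y) :
  is_pushout f0 f1 q0 q1 -> comp1 k0 f0 = comp1 k1 f1 ->
  exists k : Hom A P y, comp1 k q0 = k0 /\ comp1 k q1 = k1.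
Proof.
  intros [_ po] k_compat.
  destruct (proj1 (po y) k0 k1 k_compat) as [k [k_spec _]].
  now exists k.
Qed.

Lemma pushout_factor_cell {c c0 c1 : Ob A} (f0 : Hom A c c0) (f1 : Hom A c c1)
    {P : Ob A} (q0 : Hom A c0 P) (q1 : Hom A c1 P)
    (y : Ob A) (k k' : Hom A P y) (xi0 : Cell A c0 y) (xi1 : Cell A c1 y) :
  is_pushout f0 f1 q0 q1 ->
  cell_ok xi0 (comp1 k q0) (comp1 k' q0) -> cell_ok xi1 (comp1 k q1) (comp1 k' q1) ->
  hcomp xi0 (id2 f0) = hcomp xi1 (id2 f1) ->
  exists xi : Cell A P y,
    cell_ok xi k k' /\ hcomp xi (id2 q0) = xi0 /\ hcomp xi (id2 q1) = xi1.
Proof.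
  intros [_ po] xi0_ok xi1_ok xi_compat.
  destruct (proj2 (po y) k k' xi0 xi1 xi0_ok xi1_ok xi_compat) as [xi [xi_spec _]].
  now exists xi.
Qed.

Lemma ran_factor {a b0 c : Ob A} (f : Hom A a c) (g : Hom A a b0)
    (r : Hom A b0 c) (ga : Cell A a c) (k : Hom A b0 c) (th : Cell A a c) :
  is_ran f g r ga -> cell_ok th (comp1 k g) f ->
  exists be : Cell A b0 c, cell_ok be k r /\ vcomp ga (hcomp be (id2 g)) = th.
Proof.
  intros [_ ran] th_ok.
  destruct (ran k th th_ok) as [be [be_spec _]].
  now exists be.
Qed.

End UniversalProperties.

Section TwoCategory.
Variable A : PreTwoCat.
Hypothesis HA : is_two_cat A.

Lemma comp1_eq_assoc a b c (x : Hom A b c) (y : Hom A a b) (z : Hom A a c) :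
  comp1 x y = z -> forall d (w : Hom A d a), comp1 x (comp1 y w) = comp1 z w.
Proof. intros <- d w. apply (comp1_assoc HA). Qed.

Local Ltac rewrite_hom_hyp :=
  match goal with
  | H : comp1 ?x ?y = _ |- context [comp1 ?x ?y] => rewrite H
  | H : comp1 ?x ?y = _ |- context [comp1 ?x (comp1 ?y _)] => rewrite (comp1_eq_assoc H)
  end.

Local Ltac simpl_hom :=
  repeat (rewrite <- ?(comp1_assoc HA); rewrite ?(comp1_id_l HA), ?(comp1_id_r HA);
          rewrite_hom_hyp);
  rewrite <- ?(comp1_assoc HA); rewrite ?(comp1_id_l HA), ?(comp1_id_r HA).

Local Ltac rewrite_cell_hyp :=
  match goal with
  | H : src ?x = _ |- context [src ?x] => rewrite H
  | H : tgt ?x = _ |- context [tgt ?x] => rewrite H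
  end.

(* Section hypotheses on sources and targets are stated as separate equations,
   never as [cell_ok]: destructing a section hypothesis does not clear it, so
   the conjunction-splitting loop below would not terminate. *)
Local Ltac solve_cell :=
  unfold cell_ok in *;
  repeat match goal with H : _ /\ _ |- _ => destruct H end;
  try split;
  repeat first [ rewrite (src_hcomp HA) | rewrite (tgt_hcomp HA)
               | rewrite (src_id2 HA) | rewrite (tgt_id2 HA)
               | rewrite (src_vcomp HA) by solve_cell
               | rewrite (tgt_vcomp HA) by solve_cell
               | rewrite_cell_hyp ];
  simpl_hom; reflexivity.

Lemma vcomp_id2_l a b (x : Cell A a b) f : tgt x = f -> vcomp (id2 f) x = x.
Proof. intros <-. apply (vcomp_id_l HA). Qed.

Lemma vcomp_id2_r a b (x : Cell A a b) f : src x = f -> vcomp x (id2 f) = x.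
Proof. intros <-. apply (vcomp_id_r HA). Qed.

Lemma whiskerl_vcomp a b c (f : Hom A b c) (x y : Cell A a b) : src x = tgt y ->
  hcomp (id2 f) (vcomp x y) = vcomp (hcomp (id2 f) x) (hcomp (id2 f) y).
Proof.
  intros xy. rewrite <- (interchange HA) by solve_cell.
  now rewrite vcomp_id2_l by apply (tgt_id2 HA).
Qed.

Lemma whiskerr_vcomp a b c (f : Hom A a b) (x y : Cell A b c) : src x = tgt y ->
  hcomp (vcomp x y) (id2 f) = vcomp (hcomp x (id2 f)) (hcomp y (id2 f)).
Proof.
  intros xy. rewrite <- (interchange HA) by solve_cell.
  now rewrite vcomp_id2_l by apply (tgt_id2 HA).
Qed.

Lemma whiskerl_comp a b c d (f : Hom A c d) (g : Hom A b c) (x : Cell A a b) :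
  hcomp (id2 f) (hcomp (id2 g) x) = hcomp (id2 (comp1 f g)) x.
Proof. now rewrite (hcomp_assoc HA), (hcomp_id2 HA). Qed.

Lemma whiskerr_comp a b c d (x : Cell A c d) (g : Hom A b c) (f : Hom A a b) :
  hcomp (hcomp x (id2 g)) (id2 f) = hcomp x (id2 (comp1 g f)).
Proof. now rewrite <- (hcomp_assoc HA), (hcomp_id2 HA). Qed.

Lemma whisker_exchange a b c (x : Cell A a b) (y : Cell A b c) f f' g g' :
  cell_ok x f f' -> cell_ok y g g' ->
  vcomp (hcomp y (id2 f')) (hcomp (id2 g) x) = vcomp (hcomp (id2 g') x) (hcomp y (id2 f)).
Proof.
  intros x_ok y_ok. rewrite <- !(interchange HA) by solve_cell.
  destruct x_ok as [x_src x_tgt], y_ok as [y_src y_tgt].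
  now rewrite vcomp_id2_r, vcomp_id2_l, vcomp_id2_l, vcomp_id2_r.
Qed.

Section CokernelDiagram.
Variables (e b : Ob A) (p : Hom A e b) (K : cokernel_diagram p).
Local Notation C := (cd_opc K).
Local Notation d0 := (cd_d0 K).
Local Notation d1 := (cd_d1 K).
Local Notation al := (cd_alpha K).
Local Notation P := (cd_P K).
Local Notation D0 := (cd_D0 K).
Local Notation D1 := (cd_D1 K).
Local Notation D2 := (cd_D2 K).
Local Notation s0 := (cd_s0 K).

Let al_src : src al = comp1 d1 p := proj1 (proj1 (cd_opc_spec K)).
Let al_tgt : tgt al = comp1 d0 p := proj2 (proj1 (cd_opc_spec K)).
Let D2_d0 : comp1 D2 d0 = comp1 D0 d1 := proj1 (cd_po_spec K).
Let D1_d1 : comp1 D1 d1 = comp1 D2 d1 := proj1 (cd_D1_spec K).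
Let D1_d0 : comp1 D1 d0 = comp1 D0 d0 := proj1 (proj2 (cd_D1_spec K)).
Let D1_al : hcomp (id2 D1) al = vcomp (hcomp (id2 D0) al) (hcomp (id2 D2) al)
  := proj2 (proj2 (cd_D1_spec K)).
Let s0_d0 : comp1 s0 d0 = id1 b := proj1 (cd_s0_spec K).
Let s0_d1 : comp1 s0 d1 = id1 b := proj1 (proj2 (cd_s0_spec K)).
Let s0_al : hcomp (id2 s0) al = id2 p := proj2 (proj2 (cd_s0_spec K)).

Section Ran.
Variables (t : Hom A b b) (ga : Cell A e b).
Hypothesis ran_tga : is_ran p p t ga.
Let ga_src : src ga = comp1 t p := proj1 (proj1 ran_tga).
Let ga_tgt : tgt ga = p := proj2 (proj1 ran_tga).

Lemma ran_cell_unique k (x y : Cell A b b) : cell_ok x k t -> cell_ok y k t ->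
  vcomp ga (hcomp x (id2 p)) = vcomp ga (hcomp y (id2 p)) -> x = y.
Proof.
  intros x_ok y_ok E.
  destruct (proj2 ran_tga k (vcomp ga (hcomp x (id2 p)))) as [z [_ z_uniq]].
  { solve_cell. }
  transitivity z; [symmetry|]; apply z_uniq; split; auto.
Qed.

Lemma codensity_mult_exists : exists m : Cell A b b,
  cell_ok m (comp1 t t) t /\ vcomp ga (hcomp m (id2 p)) = vcomp ga (hcomp (id2 t) ga).
Proof. apply (ran_factor ran_tga). solve_cell. Qed.

Lemma codensity_unit_exists : exists eta : Cell A b b,
  cell_ok eta (id1 b) t /\ vcomp ga (hcomp eta (id2 p)) = id2 p.
Proof. apply (ran_factor ran_tga). solve_cell. Qed.

Lemma ran_classifier_exists : exists r : Hom A C b,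
  comp1 r d0 = id1 b /\ comp1 r d1 = t /\ hcomp (id2 r) al = ga.
Proof. apply (opcomma_factor (cd_opc_spec K)). solve_cell. Qed.

Section AlphaFactorisation.
Variable ah : Cell A b C.
Hypothesis ah_src : src ah = d1.
Hypothesis ah_tgt : tgt ah = comp1 d0 t.
Hypothesis ah_al : vcomp (hcomp (id2 d0) ga) (hcomp ah (id2 p)) = al.

Variable r : Hom A C b.
Hypothesis r_d0 : comp1 r d0 = id1 b.
Hypothesis r_d1 : comp1 r d1 = t.
Hypothesis r_al : hcomp (id2 r) al = ga.

Lemma r_whisker_ah : hcomp (id2 r) ah = id2 t.
Proof.
  apply ran_cell_unique with (k := t); try solve_cell.
  rewrite <- (hcomp_assoc HA).
  transitivity (hcomp (id2 r) al).
  - rewrite <- ah_al, whiskerl_vcomp by solve_cell.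
    now rewrite whiskerl_comp, r_d0, (hcomp_id_l HA).
  - rewrite r_al, (hcomp_id2 HA), vcomp_id2_r by solve_cell. reflexivity.
Qed.

Definition desc_of_act {y} (h : Hom A y b) (th : Cell A y b) : Cell A y C :=
  vcomp (hcomp (id2 d0) th) (hcomp ah (id2 h)).

Lemma desc_of_act_ok y (h : Hom A y b) th : cell_ok th (comp1 t h) h ->
  cell_ok (desc_of_act h th) (comp1 d1 h) (comp1 d0 h).
Proof. intros. unfold desc_of_act. solve_cell. Qed.

Lemma desc_of_act_whisker y z (h : Hom A y b) (g : Hom A z y) th :
  cell_ok th (comp1 t h) h ->
  hcomp (desc_of_act h th) (id2 g) = desc_of_act (comp1 h g) (hcomp th (id2 g)).
Proof.
  intros. unfold desc_of_act.
  rewrite whiskerr_vcomp by solve_cell.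
  now rewrite <- (hcomp_assoc HA), whiskerr_comp.
Qed.

Lemma r_whisker_desc_of_act y (h : Hom A y b) th : cell_ok th (comp1 t h) h ->
  hcomp (id2 r) (desc_of_act h th) = th.
Proof.
  intros. unfold desc_of_act.
  rewrite whiskerl_vcomp by solve_cell.
  rewrite whiskerl_comp, r_d0, (hcomp_id_l HA), (hcomp_assoc HA), r_whisker_ah.
  rewrite (hcomp_id2 HA). apply vcomp_id2_r. solve_cell.
Qed.

Lemma r_whisker_ok y (h : Hom A y b) be : cell_ok be (comp1 d1 h) (comp1 d0 h) ->
  cell_ok (hcomp (id2 r) be) (comp1 t h) h.
Proof. intros. solve_cell. Qed.

(* om is the unit of an adjunction r -| d0 whose counit is the identity
   r d0 = id; only its components at d0 and d1 are needed. *)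
Lemma omega_exists : exists om : Cell A C C,
  cell_ok om (id1 C) (comp1 d0 r) /\
  hcomp om (id2 d0) = id2 d0 /\ hcomp om (id2 d1) = ah.
Proof.
  destruct (opcomma_factor_cell (h := id1 C) (h' := comp1 d0 r) (xi0 := id2 d0) (xi1 := ah)
              (cd_opc_spec K)) as [om [om_ok om_spec]]; try solve_cell.
  - rewrite (hcomp_id2 HA), (hcomp_id_l HA), vcomp_id2_l by solve_cell.
    rewrite <- whiskerl_comp, r_al. now symmetry.
  - now exists om.
Qed.

Lemma desc_of_act_r_whisker y (h : Hom A y b) be : cell_ok be (comp1 d1 h) (comp1 d0 h) ->
  desc_of_act h (hcomp (id2 r) be) = be.
Proof.
  intros be_ok. unfold desc_of_act.
  destruct omega_exists as [om [om_ok [om_d0 om_d1]]].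
  pose proof (whisker_exchange be_ok om_ok) as E.
  rewrite <- !whiskerr_comp, om_d0, om_d1, (hcomp_id2 HA), vcomp_id2_l,
    (hcomp_id_l HA) in E by solve_cell.
  rewrite whiskerl_comp. now symmetry.
Qed.

Lemma desc_of_act_morphism_iff y (h0 h1 : Hom A y b) th0 th1 xi :
  cell_ok th0 (comp1 t h0) h0 -> cell_ok th1 (comp1 t h1) h1 -> cell_ok xi h1 h0 ->
  (vcomp (desc_of_act h0 th0) (hcomp (id2 d1) xi)
     = vcomp (hcomp (id2 d0) xi) (desc_of_act h1 th1)
   <-> vcomp xi th1 = vcomp th0 (hcomp (id2 t) xi)).
Proof.
  intros th0_ok th1_ok xi_ok.
  pose proof (desc_of_act_ok th0_ok). pose proof (desc_of_act_ok th1_ok).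
  split.
  - intros E. apply (f_equal (hcomp (id2 r))) in E.
    rewrite !whiskerl_vcomp in E by solve_cell.
    rewrite !r_whisker_desc_of_act, !whiskerl_comp, r_d0, r_d1, (hcomp_id_l HA) in E
      by assumption.
    now symmetry.
  - intros E. unfold desc_of_act.
    rewrite <- (vcomp_assoc HA) by solve_cell.
    rewrite (whisker_exchange (f := h1) (f' := h0) (g := d1) (g' := comp1 d0 t) xi_ok)
      by solve_cell.
    rewrite (vcomp_assoc HA) by solve_cell.
    rewrite <- (whiskerl_comp d0 t xi), <- whiskerl_vcomp, <- E, whiskerl_vcomp
      by solve_cell.
    rewrite <- (vcomp_assoc HA) by solve_cell.
    reflexivity.
Qed.

Lemma R_exists : exists R : Hom A P b, comp1 R D0 = r /\ comp1 R D2 = comp1 t r.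
Proof.
  destruct (pushout_factor (k0 := comp1 t r) (k1 := r) (cd_po_spec K)) as [R [R_D2 R_D0]].
  - now rewrite <- (comp1_assoc HA), r_d0, r_d1, (comp1_id_r HA).
  - now exists R.
Qed.

Section Detection.
Variable R : Hom A P b.
Hypothesis R_D0 : comp1 R D0 = r.
Hypothesis R_D2 : comp1 R D2 = comp1 t r.

(* Om is glued on the pushout from D0 om and, along D2, from the 2-cell
   D2 => D0 d1 r given on the opcomma by id and D2 ah, followed by
   D0 om (d1 r). *)
Lemma Omega_exists (om : Cell A C C) :
  cell_ok om (id1 C) (comp1 d0 r) ->
  exists Om : Cell A P P,
    cell_ok Om (id1 P) (comp1 (comp1 D0 d0) R) /\ hcomp Om (id2 D0) = hcomp (id2 D0) om.
Proof.
  intros om_ok.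
  destruct (opcomma_factor_cell (h := D2) (h' := comp1 (comp1 D0 d1) r)
              (xi0 := id2 (comp1 D2 d0)) (xi1 := hcomp (id2 D2) ah) (cd_opc_spec K))
    as [ka [ka_ok [ka_d0 _]]]; try solve_cell.
  { rewrite (hcomp_id2 HA), vcomp_id2_l by solve_cell.
    rewrite <- (whiskerl_comp (comp1 D0 d1) r al), r_al, <- D2_d0.
    rewrite <- (whiskerl_comp D2 d0 ga), <- (hcomp_assoc HA), <- whiskerl_vcomp by solve_cell.
    now rewrite ah_al. }
  destruct (pushout_factor_cell (k := id1 P) (k' := comp1 (comp1 D0 d0) R)
     (xi0 := vcomp (hcomp (hcomp (id2 D0) om) (id2 (comp1 d1 r))) ka)
     (xi1 := hcomp (id2 D0) om) (cd_po_spec K)) as [Om [Om_ok [_ Om_D0]]]; try solve_cell.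
  - rewrite whiskerr_vcomp by solve_cell.
    rewrite ka_d0, whiskerr_comp, <- (comp1_assoc HA), r_d0, (comp1_id_r HA).
    rewrite vcomp_id2_r by solve_cell.
    reflexivity.
  - now exists Om.
Qed.

(* Every 2-cell X : k => D0 d0 g factors as (D0 d0 (R X)) . (Om k). *)
Lemma whisker_R_injective y (g : Hom A y b) k (X Y : Cell A y P) :
  cell_ok X k (comp1 (comp1 D0 d0) g) -> cell_ok Y k (comp1 (comp1 D0 d0) g) ->
  hcomp (id2 R) X = hcomp (id2 R) Y -> X = Y.
Proof.
  destruct omega_exists as [om [om_ok [om_d0 om_d1]]].
  destruct (Omega_exists om_ok) as [Om [Om_ok Om_D0]].
  assert (Om_trivial : hcomp Om (id2 (comp1 (comp1 D0 d0) g))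
                       = id2 (comp1 (comp1 D0 d0) g)).
  { rewrite <- !whiskerr_comp, Om_D0, <- (hcomp_assoc HA (id2 D0) om (id2 d0)), om_d0.
    now rewrite !(hcomp_id2 HA). }
  assert (factor : forall Z : Cell A y P, cell_ok Z k (comp1 (comp1 D0 d0) g) ->
     Z = vcomp (hcomp (id2 (comp1 D0 d0)) (hcomp (id2 R) Z)) (hcomp Om (id2 k))).
  { intros Z Z_ok.
    pose proof (whisker_exchange Z_ok Om_ok) as E.
    rewrite Om_trivial, (hcomp_id_l HA), vcomp_id2_l in E by solve_cell.
    rewrite whiskerl_comp. exact E. }
  intros X_ok Y_ok RXY. now rewrite (factor X X_ok), (factor Y Y_ok), RXY.
Qed.

End Detection.

Section Monad.
Variables m eta : Cell A b b.
Hypothesis m_src : src m = comp1 t t.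
Hypothesis m_tgt : tgt m = t.
Hypothesis m_ran : vcomp ga (hcomp m (id2 p)) = vcomp ga (hcomp (id2 t) ga).
Hypothesis eta_src : src eta = id1 b.
Hypothesis eta_tgt : tgt eta = t.
Hypothesis eta_ran : vcomp ga (hcomp eta (id2 p)) = id2 p.

Lemma s0_whisker_ah : hcomp (id2 s0) ah = eta.
Proof.
  apply ran_cell_unique with (k := id1 b); try solve_cell.
  rewrite <- (hcomp_assoc HA), eta_ran.
  transitivity (hcomp (id2 s0) al); [|exact s0_al].
  rewrite <- ah_al, whiskerl_vcomp by solve_cell.
  now rewrite whiskerl_comp, s0_d0, (hcomp_id_l HA).
Qed.

Lemma R_D1_whisker_ah R : comp1 R D0 = r -> comp1 R D2 = comp1 t r ->
  hcomp (id2 (comp1 R D1)) ah = m.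
Proof.
  intros R_D0 R_D2.
  assert (RD1_d0 : comp1 (comp1 R D1) d0 = id1 b) by solve_cell.
  assert (RD1_d1 : comp1 (comp1 R D1) d1 = comp1 t t) by solve_cell.
  apply ran_cell_unique with (k := comp1 t t); try solve_cell.
  rewrite m_ran, <- (hcomp_assoc HA).
  transitivity (hcomp (id2 (comp1 R D1)) al).
  - rewrite <- ah_al, whiskerl_vcomp by solve_cell.
    now rewrite whiskerl_comp, RD1_d0, (hcomp_id_l HA).
  - rewrite <- whiskerl_comp, D1_al, whiskerl_vcomp by solve_cell.
    now rewrite !whiskerl_comp, R_D0, R_D2, r_al, <- whiskerl_comp, r_al.
Qed.

Lemma s0_whisker_desc_of_act y (h : Hom A y b) th : cell_ok th (comp1 t h) h ->
  hcomp (id2 s0) (desc_of_act h th) = vcomp th (hcomp eta (id2 h)).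
Proof.
  intros. unfold desc_of_act.
  rewrite whiskerl_vcomp by solve_cell.
  now rewrite whiskerl_comp, s0_d0, (hcomp_id_l HA), (hcomp_assoc HA), s0_whisker_ah.
Qed.

Lemma R_D1_whisker_desc_of_act R y (h : Hom A y b) th :
  comp1 R D0 = r -> comp1 R D2 = comp1 t r -> cell_ok th (comp1 t h) h ->
  hcomp (id2 R) (hcomp (id2 D1) (desc_of_act h th)) = vcomp th (hcomp m (id2 h)).
Proof.
  intros R_D0 R_D2 th_ok.
  assert (RD1_d0 : comp1 (comp1 R D1) d0 = id1 b) by solve_cell.
  unfold desc_of_act.
  rewrite whiskerl_comp, whiskerl_vcomp by solve_cell.
  now rewrite whiskerl_comp, RD1_d0, (hcomp_id_l HA), (hcomp_assoc HA),
    (R_D1_whisker_ah R_D0 R_D2).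
Qed.

Lemma is_desc_desc_of_act y (h : Hom A y b) th : cell_ok th (comp1 t h) h ->
  (is_desc (K := K) h (desc_of_act h th) <-> is_alg t m eta h th).
Proof.
  intros th_ok. pose proof (desc_of_act_ok th_ok) as be_ok.
  destruct R_exists as [R [R_D0 R_D2]].
  assert (R_cocycle : hcomp (id2 R) (vcomp (hcomp (id2 D0) (desc_of_act h th))
                                           (hcomp (id2 D2) (desc_of_act h th)))
                      = vcomp th (hcomp (id2 t) th)).
  { rewrite whiskerl_vcomp by solve_cell.
    rewrite !whiskerl_comp, R_D0, R_D2, <- whiskerl_comp.
    now rewrite r_whisker_desc_of_act. }
  unfold is_desc, is_alg.
  rewrite s0_whisker_desc_of_act by assumption.
  split.
  - intros [_ [cocycle unit]]. repeat split; try apply th_ok; try assumption.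
    apply (f_equal (hcomp (id2 R))) in cocycle.
    now rewrite R_cocycle, (R_D1_whisker_desc_of_act R_D0 R_D2 th_ok) in cocycle.
  - intros [_ [assoc unit]]. repeat split; try apply be_ok; try assumption.
    apply (whisker_R_injective R_D0 R_D2 (g := h) (k := comp1 (comp1 D2 d1) h));
      try solve_cell.
    now rewrite R_cocycle, (R_D1_whisker_desc_of_act R_D0 R_D2 th_ok).
Qed.

Lemma EM_is_lax_descent (bT : Ob A) (u : Hom A bT b) (mu : Cell A bT b) :
  is_EM t m eta u mu -> is_lax_descent (K := K) u (desc_of_act u mu).
Proof.
  intros [mu_ok EM] y. destruct (EM y) as [EM_alg [EM_lift EM_cell]].
  assert (mu_g_ok : forall g : Hom A y bT,
    cell_ok (hcomp mu (id2 g)) (comp1 t (comp1 u g)) (comp1 u g)) by (intros; solve_cell).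
  split; [|split].
  - intros g. rewrite desc_of_act_whisker by assumption.
    now apply is_desc_desc_of_act.
  - intros h be be_desc. pose proof (proj1 be_desc) as be_ok.
    pose proof (r_whisker_ok be_ok) as th_ok.
    assert (th_alg : is_alg t m eta h (hcomp (id2 r) be)).
    { apply is_desc_desc_of_act; [assumption|]. now rewrite desc_of_act_r_whisker. }
    apply (ex_unique_iff (EM_lift h _ th_alg)).
    intros g. rewrite desc_of_act_whisker by assumption.
    split; intros [<- E]; split; auto.
    + now rewrite E, desc_of_act_r_whisker.
    + now rewrite <- E, r_whisker_desc_of_act.
  - intros g g' xi xi_ok E. rewrite !desc_of_act_whisker in E by assumption.
    apply EM_cell; [assumption|].
    now apply (desc_of_act_morphism_iff (mu_g_ok g') (mu_g_ok g) xi_ok).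
Qed.

Lemma lax_descent_is_EM (L : Ob A) (d : Hom A L b) (Psi : Cell A L C) :
  is_lax_descent (K := K) d Psi -> is_EM t m eta d (hcomp (id2 r) Psi).
Proof.
  intros lax.
  assert (Psi_ok : cell_ok Psi (comp1 d1 d) (comp1 d0 d)).
  { destruct (proj1 (lax L) (id1 L)) as [Psi_ok _].
    now rewrite (comp1_id_r HA), (hcomp_id_r HA) in Psi_ok. }
  split; [now apply r_whisker_ok|].
  intros y. destruct (lax y) as [lax_desc [lax_lift lax_cell]].
  assert (Psi_g_ok : forall g : Hom A y L,
    cell_ok (hcomp Psi (id2 g)) (comp1 d1 (comp1 d g)) (comp1 d0 (comp1 d g)))
    by (intros; solve_cell).
  assert (r_Psi_g : forall g : Hom A y L,
    hcomp (hcomp (id2 r) Psi) (id2 g) = hcomp (id2 r) (hcomp Psi (id2 g)))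
    by (intros; symmetry; apply (hcomp_assoc HA)).
  split; [|split].
  - intros g. rewrite r_Psi_g.
    apply is_desc_desc_of_act; [now apply r_whisker_ok|].
    rewrite desc_of_act_r_whisker by auto. apply lax_desc.
  - intros h th th_alg. pose proof (proj1 th_alg) as th_ok.
    apply (ex_unique_iff (lax_lift h _ (proj2 (is_desc_desc_of_act th_ok) th_alg))).
    intros g. rewrite r_Psi_g.
    split; intros [<- E]; split; auto.
    + now rewrite E, r_whisker_desc_of_act.
    + now rewrite <- E, desc_of_act_r_whisker.
  - intros g g' xi xi_ok E. apply lax_cell; [assumption|].
    rewrite !r_Psi_g in E.
    apply (desc_of_act_morphism_iff (r_whisker_ok (Psi_g_ok g')) (r_whisker_ok (Psi_g_ok g))
             xi_ok) in E.
    now rewrite !desc_of_act_r_whisker in E.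
Qed.

End Monad.
End AlphaFactorisation.
End Ran.

(* The witness is (d0 psi) . ah, where ah factors alpha through the preserved
   extension and psi : t => t' is the comparison of the two extensions. *)
Lemma preserved_ran_factors_alpha t ga t' ga' :
  is_ran p p t ga -> preserves_ran d0 p p t ga -> is_ran p p t' ga' ->
  exists ah : Cell A b C, cell_ok ah d1 (comp1 d0 t') /\
    vcomp (hcomp (id2 d0) ga') (hcomp ah (id2 p)) = al.
Proof.
  intros ran_tga pres ran_tga'.
  pose proof (proj1 ran_tga) as ga_ok. pose proof (proj1 ran_tga') as ga'_ok.
  destruct (ran_factor (k := d1) (th := al) pres) as [ah [ah_ok ah_al]]; [solve_cell|].
  destruct (ran_factor (k := t) (th := ga) ran_tga') as [psi [psi_ok psi_ga]]; [solve_cell|].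
  exists (vcomp (hcomp (id2 d0) psi) ah). split; [solve_cell|].
  rewrite whiskerr_vcomp, (vcomp_assoc HA), <- (hcomp_assoc HA), <- whiskerl_vcomp
    by solve_cell.
  now rewrite psi_ga.
Qed.

Lemma monadic_iff_effective_faithful :
  (exists (t : Hom A b b) (ga : Cell A e b),
      is_ran p p t ga /\ preserves_ran d0 p p t ga) ->
  (monadic p <-> effective_faithful K).
Proof.
  intros [t [ga [ran_tga pres]]]. split.
  - intros [t' [ga' [ran_tga' [m [eta [[m_src m_tgt] [m_ran [[eta_src eta_tgt] [eta_ran
      [bT [u [mu [EM [pT [u_pT [mu_pT pT_equiv]]]]]]]]]]]]]]]].
    destruct (preserved_ran_factors_alpha ran_tga pres ran_tga') as [ah [[ah_src ah_tgt] ah_al]].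
    destruct (ran_classifier_exists ran_tga') as [r [r_d0 [r_d1 r_al]]].
    exists bT, u, (desc_of_act ah u mu). split.
    + now apply (EM_is_lax_descent ran_tga' ah_src ah_tgt ah_al r_d0 r_d1 r_al m_src m_tgt m_ran
                   eta_src eta_tgt eta_ran).
    + exists pT. split; [assumption|]. split; [|assumption].
      rewrite (desc_of_act_whisker (t := t')) by (destruct (proj1 EM); solve_cell).
      rewrite u_pT, mu_pT. exact ah_al.
  - intros [L [d [Psi [lax [pH [d_pH [Psi_pH pH_equiv]]]]]]].
    destruct (preserved_ran_factors_alpha ran_tga pres ran_tga) as [ah [[ah_src ah_tgt] ah_al]].
    destruct (codensity_mult_exists ran_tga) as [m [[m_src m_tgt] m_ran]].
    destruct (codensity_unit_exists ran_tga) as [eta [[eta_src eta_tgt] eta_ran]].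
    destruct (ran_classifier_exists ran_tga) as [r [r_d0 [r_d1 r_al]]].
    exists t, ga. split; [assumption|].
    exists m, eta. do 2 (split; [split; assumption|]; split; [assumption|]).
    exists L, d, (hcomp (id2 r) Psi). split.
    + now apply (lax_descent_is_EM ran_tga ah_src ah_tgt ah_al r_d0 r_d1 r_al m_src m_tgt m_ran
                   eta_src eta_tgt eta_ran).
    + exists pH. split; [assumption|]. split; [|assumption].
      now rewrite <- (hcomp_assoc HA), Psi_pH.
Qed.

End CokernelDiagram.
End TwoCategory.

Section Duality.
Variable A : PreTwoCat.

Lemma is_two_cat_co : is_two_cat A -> is_two_cat (co A).
Proof.
  intros HA. constructor; cbn; intros.
  - apply (tgt_id2 HA).
  - apply (src_id2 HA).
  - now apply (tgt_vcomp HA).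
  - now apply (src_vcomp HA).
  - apply (vcomp_id_r HA).
  - apply (vcomp_id_l HA).
  - symmetry. now apply (vcomp_assoc HA).
  - apply (comp1_assoc HA).
  - apply (comp1_id_l HA).
  - apply (comp1_id_r HA).
  - apply (tgt_hcomp HA).
  - apply (src_hcomp HA).
  - apply (hcomp_assoc HA).
  - apply (hcomp_id_l HA).
  - apply (hcomp_id_r HA).
  - apply (hcomp_id2 HA).
  - now apply (interchange HA).
Qed.

Lemma is_opcomma_co e b (p : Hom A e b) c (d0 d1 : Hom A b c) al :
  is_opcomma p d0 d1 al -> is_opcomma (A := co A) p d1 d0 al.
Proof.
  intros [al_ok opc]. split; [unfold cell_ok in *; cbn; tauto|].
  intros y. destruct (opc y) as [opc1 opc2]. unfold cell_ok; cbn. split.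
  - intros h0 h1 be be_ok.
    refine (ex_unique_iff (opc1 h1 h0 be _) _); unfold cell_ok; tauto.
  - intros h h' xi0 xi1 xi0_ok xi1_ok E.
    refine (ex_unique_iff (opc2 h' h xi1 xi0 _ _ _) _); [| |now symmetry|];
      unfold cell_ok; tauto.
Qed.

Lemma is_pushout_co c c0 c1 (f0 : Hom A c c0) (f1 : Hom A c c1)
    P (q0 : Hom A c0 P) (q1 : Hom A c1 P) :
  is_pushout f0 f1 q0 q1 -> is_pushout (A := co A) f1 f0 q1 q0.
Proof.
  intros [q_compat po]. split; [now symmetry|].
  intros y. destruct (po y) as [po1 po2]. unfold cell_ok; cbn. split.
  - intros k0 k1 E.
    refine (ex_unique_iff (po1 k1 k0 _) _); [now symmetry|]. tauto.
  - intros k k' xi0 xi1 xi0_ok xi1_ok E.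
    refine (ex_unique_iff (po2 k' k xi1 xi0 _ _ _) _); [| |now symmetry|];
      unfold cell_ok; tauto.
Qed.

Definition cokernel_diagram_co e b (p : Hom A e b) (K : cokernel_diagram p) :
  cokernel_diagram (A := co A) p.
Proof.
  refine (@Build_cokernel_diagram (co A) e b p (cd_opc K) (cd_d1 K) (cd_d0 K) (cd_alpha K)
            (is_opcomma_co (cd_opc_spec K)) (cd_P K) (cd_D2 K) (cd_D0 K)
            (is_pushout_co (cd_po_spec K)) (cd_D1 K) _ (cd_s0 K) _).
  - destruct (cd_D1_spec K) as [D1_d1 [D1_d0 D1_al]]. cbn. auto.
  - destruct (cd_s0_spec K) as [s0_d0 [s0_d1 s0_al]]. cbn. auto.
Defined.

Lemma is_iso_cell_co a b (f g : Hom A a b) :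
  (exists th, is_iso_cell (A := co A) th f g) <-> (exists th, is_iso_cell th f g).
Proof.
  unfold is_iso_cell, cell_ok. cbn.
  split; intros [th [th_ok [th' [th'_ok [E1 E2]]]]];
    exists th'; split; [tauto| |tauto|]; exists th; tauto.
Qed.

Lemma is_equivalence_co a b (f : Hom A a b) :
  is_equivalence (A := co A) f <-> is_equivalence f.
Proof.
  unfold is_equivalence. split; intros [g [iso1 iso2]]; exists g;
    split; apply is_iso_cell_co; assumption.
Qed.

Lemma is_desc_co e b (p : Hom A e b) (K : cokernel_diagram p) y (h : Hom A y b) be :
  is_desc (A := co A) (K := cokernel_diagram_co K) h be <-> is_desc (K := K) h be.
Proof. unfold is_desc, cell_ok. cbn. tauto. Qed.

Lemma is_lax_descent_co e b (p : Hom A e b) (K : cokernel_diagram p) L (d : Hom A L b) Psi :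
  is_lax_descent (A := co A) (K := cokernel_diagram_co K) d Psi <-> is_lax_descent (K := K) d Psi.
Proof.
  unfold is_lax_descent. setoid_rewrite is_desc_co.
  unfold cell_ok; cbn.
  split; intros lax y; destruct (lax y) as [lax_desc [lax_lift lax_cell]];
    (split; [exact lax_desc|split; [exact lax_lift|]]);
    intros g g' xi xi_ok E;
    (refine (ex_unique_iff (lax_cell g' g xi _ _) _); [|now symmetry|]);
    unfold cell_ok; tauto.
Qed.

Lemma effective_faithful_co e b (p : Hom A e b) (K : cokernel_diagram p) :
  effective_faithful (A := co A) (cokernel_diagram_co K) <-> effective_faithful K.
Proof.
  unfold effective_faithful. cbn.
  setoid_rewrite is_lax_descent_co. setoid_rewrite is_equivalence_co.
  reflexivity.
Qed.

End Duality.

Theorem corollary5p9 (A : PreTwoCat) (HA : is_two_cat A)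
    (e b : Ob A) (p : Hom A e b) (K : cokernel_diagram p) :
  ((exists (t : Hom A b b) (ga : Cell A e b),
       is_ran p p t ga /\ preserves_ran (cd_d0 K) p p t ga) ->
     (monadic p <-> effective_faithful K))
  /\
  ((exists (t : Hom A b b) (ga : Cell A e b),
       is_ran (A := co A) p p t ga /\ preserves_ran (A := co A) (cd_d1 K) p p t ga) ->
     (comonadic p <-> effective_faithful K)).
Proof.
  split.
  - apply (monadic_iff_effective_faithful HA).
  - intros coran. unfold comonadic.
    rewrite <- effective_faithful_co.
    exact (monadic_iff_effective_faithful (is_two_cat_co HA) (K := cokernel_diagram_co K) coran).
Qed.
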